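(* Let $C\subseteq\mathbb{F}_q^n$ be a linear code, $t\ge 1$ an integer, and $(A,B)$ a $2$-power $t$-error locating pair for $C$. Let $\mathbf{y}=\mathbf{c}+\mathbf{e}$ with $\mathbf{c}\in C$ and $\mathrm{w}(\mathbf{e})=t$, $I_{\mathbf{e}}=\mathrm{supp}(\mathbf{e})$, and let $M_1,M_2,M$ be as defined in the context. Run the following algorithm on input $(C,\mathbf{y},t,A,B)$: compute $M$; set $J=Z(M)$; with $H$ a full-rank parity-check matrix of $C$ and $H_J$ the submatrix of $H$ formed by the columns with index in $J$, if the linear system $H_J\mathbf{u}^T=H\mathbf{y}^T$ (unknown $\mathbf{u}\in\mathbb{F}_q^{|J|}$) has no nonzero solution, return failure; otherwise take a nonzero solution $\mathbf{u}$, let $\mathbf{e}'\in\mathbb{F}_q^n$ have $\mathbf{e}'_J=\mathbf{u}$ and $e'_i=0$ for $i\notin J$, and return $\mathbf{y}-\mathbf{e}'$. Then the algorithm returns $\mathbf{c}$ if and only if $A(I_{\mathbf{e}})=M$.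
   Context: All codes are $\mathbb{F}_q$-linear subspaces of $\mathbb{F}_q^n$. $\mathbf{u}*\mathbf{v}=(u_1v_1,\dots,u_nv_n)$, $\mathbf{u}^i=(u_1^i,\dots,u_n^i)$; $A*B$ is the span of all $\mathbf{a}*\mathbf{b}$; $\langle\mathbf{u},\mathbf{v}\rangle=\sum_iu_iv_i$ and $X^\perp$ is the dual. $\mathrm{w}$ Hamming weight, $\mathrm{d}$ minimum distance, $\mathrm{supp}(\mathbf{x})=\{i:x_i\ne0\}$. For $J=\{j_1<\dots<j_s\}\subseteq\{1,\dots,n\}$, $\mathbf{x}_J=(x_{j_1},\dots,x_{j_s})$; $A(J)=\{\mathbf{a}\in A:\mathbf{a}_J=\mathbf{0}\}\subseteq\mathbb{F}_q^n$; $Z(M)=\{i: a_i=0\ \forall\mathbf{a}\in M\}$. $M_1=\{\mathbf{a}\in A\mid \langle \mathbf{a}*\mathbf{y},\mathbf{b}\rangle=0\ \forall \mathbf{b}\in B\}$, $M_2=\{\mathbf{a}\in A\mid \langle \mathbf{a}*\mathbf{y}^2,\mathbf{v}\rangle=0\ \forall \mathbf{v}\in (B^{\perp}*C)^{\perp}\}$, $M=M_1\cap M_2$. A pair $(A,B)$ is a $2$-power $t$-error locating pair for $C$ if: (1) $A*B\subseteq C^\perp$; (2) $\dim A>t$; (3) $\mathrm{d}(A^\perp)>t$; (4) $\mathrm{d}(A)+\mathrm{d}(C)>n$; (5) $\dim B+\dim (B^\perp*C)^\perp\ge t$. *)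

(* Codes over F_q = finite field F, as F-subspaces
   ({vspace 'rV[F]_n}) of the row space 'rV[F]_n = F^n. *)
From HB Require Import structures.
From mathcomp Require Import all_boot all_order all_algebra.
Set Implicit Arguments. Unset Strict Implicit. Unset Printing Implicit Defensive.
Import GRing.Theory.
Local Open Scope ring_scope.

Section Codes.
Variables (F : finFieldType) (n : nat).
Local Notation vec := 'rV[F]_n.

Definition hprod (u v : vec) : vec := \row_i (u 0 i * v 0 i).
Definition vpow (u : vec) (k : nat) : vec := \row_i (u 0 i ^+ k).
Definition dotp (u v : vec) : F := \sum_i u 0 i * v 0 i.
Definition supp (x : vec) : {set 'I_n} := [set i | x 0 i != 0].
Definition wt (x : vec) : nat := #|supp x|.
(* minimum distance; convention: the zero code has distance n+1 *)
Definition mindist (X : {vspace vec}) : nat :=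
  \big[minn/n.+1]_(x : vec | (x \in X) && (x != 0)) wt x.
Definition dualc (X : {vspace vec}) : {vspace vec} :=
  <<[seq v <- enum {: vec} |
       [forall a : vec, (a \in X) ==> (dotp a v == 0%R)]]>>%VS.
Definition starc (X Y : {vspace vec}) : {vspace vec} :=
  <<[seq hprod x.1 x.2 | x <- enum {: (vec * vec)%type} & (x.1 \in X) && (x.2 \in Y)]>>%VS.
Definition shortc (A : {vspace vec}) (J : {set 'I_n}) : {set vec} :=
  [set a | (a \in A) && [forall j in J, a 0 j == 0]].
Definition Zset (M : {set vec}) : {set 'I_n} :=
  [set i | [forall a in M, a 0 i == 0]].

Definition M1 (A B : {vspace vec}) (y : vec) : {set vec} :=
  [set a | (a \in A) &&
     [forall b : vec, (b \in B) ==> (dotp (hprod a y) b == 0%R)]].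
Definition M2 (A B C : {vspace vec}) (y : vec) : {set vec} :=
  [set a | (a \in A) &&
     [forall v : vec, (v \in dualc (starc (dualc B) C)) ==>
                       (dotp (hprod a (vpow y 2)) v == 0%R)]].
Definition Mset (A B C : {vspace vec}) (y : vec) : {set vec} :=
  M1 A B y :&: M2 A B C y.

Definition two_power_ELP (C A B : {vspace vec}) (t : nat) : Prop :=
  [/\ (starc A B <= dualc C)%VS,
      (t < \dim A)%N,
      (t < mindist (dualc A))%N,
      (n < mindist A + mindist C)%N
    & (t <= \dim B + \dim (dualc (starc (dualc B) C)))%N].

(* H_J : columns of H with index in J (in increasing order) *)
Definition colsJ (r : nat) (H : 'M[F]_(r, n)) (J : {set 'I_n}) : 'M[F]_(r, #|J|) :=
  \matrix_(i, k) H i (enum_val k).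
Definition extendJ (J : {set 'I_n}) (u : 'rV[F]_#|J|) : vec :=
  \row_i \sum_(k : 'I_#|J| | enum_val k == i) u 0 k.

(* alg_run H A B C y out : "out" is a possible result of the algorithm on
   input (C, y, t, A, B) using parity-check matrix H; None = failure. *)
Definition alg_run (r : nat) (H : 'M[F]_(r, n)) (A B C : {vspace vec}) (y : vec)
    (out : option vec) : Prop :=
  let J := Zset (Mset A B C y) in
  match out with
  | None => forall u : 'rV[F]_#|J|, u != 0 -> colsJ H J *m u^T != H *m y^T
  | Some z => exists u : 'rV[F]_#|J|,
      [/\ u != 0, colsJ H J *m u^T = H *m y^T & z = y - extendJ u]
  end.

End Codes.

(** Every a in A vanishing on the error support I_e lies in M: on I_e we have
    a*y = a*c and a*y^2 = (a*c)*c, while a*c is orthogonal to B because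
    A*B <= C^perp, and (a*c)*c lies in B^perp*C.  As dim A > t, M therefore
    contains a nonzero a, which vanishes on J = Z(M); since d(A) + d(C) > n, no
    nonzero codeword is supported on J.  So the syndrome equation H_J u^T = H y^T
    has at most one solution, namely e_J when supp e <= J, and the algorithm
    returns c exactly when supp e <= Z(M), i.e. when M <= A(I_e). *)

From HB Require Import structures.
From mathcomp Require Import all_boot all_order all_algebra.
Import Order.TTheory GRing.Theory.
Local Open Scope ring_scope.

Set Implicit Arguments.
Unset Strict Implicit.

Section Codes.
Variables (F : finFieldType) (n : nat).
Local Notation vec := 'rV[F]_n.

Lemma dotpC (u v : vec) : dotp u v = dotp v u.
Proof. by apply: eq_bigr => i _; rewrite mulrC. Qed.

Lemma dotp_hprodl (a u v : vec) : dotp (hprod a u) v = dotp u (hprod a v).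
Proof. by apply: eq_bigr => i _; rewrite !mxE mulrCA mulrA. Qed.

Lemma dotp_sumr (I : finType) (u : vec) (k : I -> F) (w : I -> vec) :
  dotp u (\sum_i k i *: w i) = \sum_i k i * dotp u (w i).
Proof.
rewrite /dotp; under eq_bigr do rewrite summxE mulr_sumr.
rewrite exchange_big; apply: eq_bigr => i _; rewrite mulr_sumr.
by apply: eq_bigr => j _; rewrite mxE mulrCA.
Qed.

Lemma dualcP (X : {vspace vec}) v :
  reflect (forall x, x \in X -> dotp x v = 0) (v \in dualc X).
Proof.
rewrite /dualc; set s := [seq _ <- _ | _].
apply: (iffP idP) => [Xv x Xx | Xv].
  rewrite (coord_span (X := in_tuple s) Xv) dotp_sumr big1 // => i _.
  have : s`_i \in s by rewrite mem_nth.
  rewrite mem_filter => /andP[/forall_inP/(_ x Xx)/eqP-> _].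
  by rewrite mulr0.
apply: memv_span; rewrite mem_filter mem_enum memvf andbT.
by apply/forallP => a; apply/implyP => /Xv ->.
Qed.

Lemma mem_starc (X Y : {vspace vec}) a b :
  a \in X -> b \in Y -> hprod a b \in starc X Y.
Proof.
move=> Xa Yb; apply: memv_span; apply/mapP; exists (a, b) => //.
by rewrite mem_filter /= Xa Yb mem_enum memvf.
Qed.

Lemma vpow1 (u : vec) : vpow u 1 = u.
Proof. by apply/rowP => i; rewrite mxE expr1. Qed.

Lemma hprod_vpow2 (a u : vec) : hprod a (vpow u 2) = hprod (hprod a u) u.
Proof. by apply/rowP => i; rewrite !mxE expr2 mulrA. Qed.

Lemma hprod_vpowDr (a u e : vec) k :
  [forall j in supp e, a 0 j == 0] -> hprod a (vpow (u + e) k) = hprod a (vpow u k).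
Proof.
move=> /forall_inP a_e; apply/rowP => i; rewrite !mxE.
have [e_i0 | e_i] := eqVneq (e 0 i) 0; first by rewrite e_i0 addr0.
by rewrite (eqP (a_e i _)) ?mul0r // inE.
Qed.

Lemma wt_eq0 (x : vec) : (wt x == 0)%N = (x == 0).
Proof.
rewrite cards_eq0; apply/eqP/eqP => [x0 | ->].
  by apply/rowP => i; apply/eqP; move/setP/(_ i): x0; rewrite !inE mxE => /negbFE.
by apply/setP => i; rewrite !inE mxE eqxx.
Qed.

Lemma mindist_le_wt (X : {vspace vec}) x :
  x \in X -> x != 0 -> (mindist X <= wt x)%N.
Proof. by move=> Xx x_neq0; apply: (@bigmin_le_cond _ nat); rewrite Xx x_neq0. Qed.

Lemma mindist_disjoint_supp (X Y : {vspace vec}) a x :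
  a \in X -> a != 0 -> x \in Y -> x != 0 -> [disjoint supp a & supp x] ->
  (mindist X + mindist Y <= n)%N.
Proof.
move=> Xa a_neq0 Yx x_neq0 ax.
apply: leq_trans (leq_add (mindist_le_wt Xa a_neq0) (mindist_le_wt Yx x_neq0)) _.
rewrite /wt -(cardsUI (supp a)) (disjoint_setI0 ax) cards0 addn0.
by rewrite (leq_trans (max_card _)) ?card_ord.
Qed.

Lemma suppB (u v : vec) : supp (u - v) \subset supp u :|: supp v.
Proof.
apply/subsetP => i; rewrite !inE !mxE; apply: contraR; rewrite negb_or !negbK.
by move=> /andP[/eqP-> /eqP->]; rewrite subrr.
Qed.

Lemma disjoint_supp_Zset (M : {set vec}) a :
  a \in M -> [disjoint supp a & Zset M].
Proof.
move=> Ma; rewrite -setI_eq0; apply/eqP/setP => i; rewrite !inE.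
by apply/negP => /andP[/negP a_i /forall_inP/(_ a Ma)].
Qed.

Lemma subset_Zset_shortc (A : {vspace vec}) (S : {set 'I_n}) :
  S \subset Zset (shortc A S).
Proof.
apply/subsetP => j S_j; rewrite inE; apply/forall_inP => a.
by rewrite inE => /andP[_ /forall_inP->].
Qed.

Lemma subset_shortc (A : {vspace vec}) (S : {set 'I_n}) (M : {set vec}) :
  {subset M <= A} -> S \subset Zset M -> M \subset shortc A S.
Proof.
move=> MA /subsetP SZ; apply/subsetP => a Ma; rewrite inE MA //=.
by apply/forall_inP => j /SZ; rewrite inE => /forall_inP->.
Qed.

Lemma Mset_subv (A B C : {vspace vec}) y : {subset Mset A B C y <= A}.
Proof. by move=> a; rewrite !inE => /andP[/andP[]]. Qed.

Definition restrJ (J : {set 'I_n}) (x : vec) : 'rV[F]_#|J| := x *m colsJ 1%:M J.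

Lemma restrJE (J : {set 'I_n}) x k : restrJ J x 0 k = x 0 (enum_val k).
Proof.
rewrite !mxE (bigD1 (enum_val k)) //= !mxE eqxx mulr1 big1 ?addr0 // => i i_k.
by rewrite !mxE (negbTE i_k) mulr0.
Qed.

Lemma restrJ_eq0 (J : {set 'I_n}) x :
  (restrJ J x == 0) = [forall j in J, x 0 j == 0].
Proof.
apply/eqP/forall_inP => [x_J j J_j | x_J].
  by rewrite -(enum_rankK_in J_j J_j) -restrJE x_J mxE.
by apply/rowP => k; rewrite restrJE mxE; apply/eqP/x_J/enum_valP.
Qed.

Lemma extendJ_out (J : {set 'I_n}) (u : 'rV[F]_#|J|) i :
  i \notin J -> extendJ u 0 i = 0.
Proof.
by move=> J'i; rewrite mxE big1 // => k /eqP k_i; rewrite -k_i enum_valP in J'i.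
Qed.

Lemma extendJ0 (J : {set 'I_n}) : extendJ (0 : 'rV[F]_#|J|) = 0.
Proof. by apply/rowP => i; rewrite !mxE big1 // => k _; rewrite mxE. Qed.

Lemma supp_extendJ (J : {set 'I_n}) (u : 'rV[F]_#|J|) : supp (extendJ u) \subset J.
Proof. by apply/subsetP => i; rewrite inE; apply: contraR => /extendJ_out->. Qed.

Lemma restrJK (J : {set 'I_n}) (x : vec) :
  supp x \subset J -> extendJ (restrJ J x) = x.
Proof.
move=> /subsetP xJ; apply/rowP => i; have [J_i | J'i] := boolP (i \in J).
  rewrite mxE (big_pred1 (enum_rank_in J_i i)) ?restrJE ?enum_rankK_in // => k.
  apply/eqP/eqP => [k_i | ->]; last by rewrite enum_rankK_in.
  by rewrite -(enum_valK_in J_i k) k_i.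
rewrite extendJ_out //; apply/esym/eqP; apply: contraR J'i => x_i.
by apply: xJ; rewrite inE.
Qed.

Lemma colsJ_mulmx r (H : 'M[F]_(r, n)) (J : {set 'I_n}) (u : 'rV[F]_#|J|) :
  colsJ H J *m u^T = H *m (extendJ u)^T.
Proof.
apply/matrixP => i j; rewrite !mxE (partition_big enum_val xpredT) //=.
apply: eq_bigr => l _; rewrite !mxE mulr_sumr.
by apply: eq_bigr => k /eqP <-; rewrite !mxE (ord1 j).
Qed.

Lemma shortc_neq0 (A : {vspace vec}) (S : {set 'I_n}) :
  (#|S| < \dim A)%N -> exists2 a, a \in shortc A S & a != 0.
Proof.
move=> S_A; pose f := linfun (@mulmxr F 1 n #|S| (colsJ 1%:M S)).
have dim_fA : (\dim (f @: A) <= #|S|)%N.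
  by rewrite (leq_trans (dimvS (subvf _))) // dimvf dim_matrix mul1r.
have : (\dim (A :&: lker f) != 0)%N.
  rewrite -(eqn_add2r (\dim (f @: A))) limg_ker_dim add0n.
  by apply: contraTneq S_A => ->; rewrite -leqNgt.
rewrite dimv_eq0 -vpick0 => a_neq0; exists (vpick (A :&: lker f)) => //.
have := memv_pick (A :&: lker f); rewrite memv_cap memv_ker lfunE inE => /andP[-> /=].
by rewrite -restrJ_eq0.
Qed.

Section LocatingSet.
Variables (A B C : {vspace vec}) (c e : vec).
Hypotheses (C_c : c \in C) (AB_C : (starc A B <= dualc C)%VS).
Local Notation M := (Mset A B C (c + e)).

Lemma hprod_mem_dualc a : a \in A -> hprod a c \in dualc B.
Proof.
move=> A_a; apply/dualcP => b B_b; rewrite dotpC dotp_hprodl.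
by move/subvP/(_ _ (mem_starc A_a B_b))/dualcP: AB_C; apply.
Qed.

Lemma shortc_supp_subset_Mset : shortc A (supp e) \subset M.
Proof.
apply/subsetP => a; rewrite inE => /andP[A_a a_e]; rewrite !inE A_a /=.
apply/andP; split; apply/forall_inP => v v_dual.
  rewrite -[c + e]vpow1 hprod_vpowDr // vpow1 dotpC.
  by move/dualcP: (hprod_mem_dualc A_a) => /(_ v v_dual)->.
rewrite hprod_vpowDr // hprod_vpow2.
apply/eqP; move/dualcP: v_dual; apply.
exact: mem_starc (hprod_mem_dualc A_a) C_c.
Qed.

Lemma Zset_Mset_codeword_eq0 :
  (wt e < \dim A)%N -> (n < mindist A + mindist C)%N ->
  forall x, x \in C -> supp x \subset Zset M -> x = 0.
Proof.
move=> e_A AC_n x C_x x_Z; apply/eqP; apply: contraLR AC_n => x_neq0.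
have [a Ae_a a_neq0] := shortc_neq0 e_A.
have M_a := subsetP shortc_supp_subset_Mset a Ae_a.
rewrite -leqNgt (mindist_disjoint_supp _ a_neq0 C_x x_neq0) ?(Mset_subv M_a) //.
exact: disjointWr x_Z (disjoint_supp_Zset M_a).
Qed.

End LocatingSet.

Section ErasureDecoding.
Variables (C : {vspace vec}) (r : nat) (H : 'M[F]_(r, n)).
Variables (J : {set 'I_n}) (c e : vec).
Hypotheses (H_C : forall x, (x \in C) = (H *m x^T == 0)) (C_c : c \in C).

Lemma syndromeJ_eq (u : 'rV[F]_#|J|) :
  (colsJ H J *m u^T == H *m (c + e)^T) = (extendJ u - e \in C).
Proof.
have Hc : H *m c^T = 0 by apply/eqP; rewrite -H_C.
by rewrite H_C !linearD /= Hc add0r colsJ_mulmx linearN /= mulmxN subr_eq0.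
Qed.

Lemma erasure_decode_eq (u : 'rV[F]_#|J|) :
  (forall x, x \in C -> supp x \subset J -> x = 0) -> supp e \subset J ->
  colsJ H J *m u^T = H *m (c + e)^T -> c + e - extendJ u = c.
Proof.
move=> C_J e_J /eqP; rewrite syndromeJ_eq => /C_J eq0.
have /eq0/eqP : supp (extendJ u - e) \subset J.
  by rewrite (subset_trans (suppB _ _)) // subUset supp_extendJ.
by rewrite subr_eq0 => /eqP->; rewrite addrK.
Qed.

Lemma erasure_decode_solvable :
  supp e \subset J -> e != 0 ->
  exists2 u : 'rV[F]_#|J|, u != 0 & colsJ H J *m u^T = H *m (c + e)^T.
Proof.
move=> e_J e_neq0; exists (restrJ J e).
  by apply: contraNneq e_neq0 => e0; rewrite -(restrJK e_J) e0 extendJ0.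
by apply/eqP; rewrite syndromeJ_eq restrJK // subrr mem0v.
Qed.

End ErasureDecoding.

End Codes.

Theorem theorem3p5 (F : finFieldType) (n : nat) (C A B : {vspace 'rV[F]_n})
    (t : nat) (c e : 'rV[F]_n) (r : nat) (H : 'M[F]_(r, n))
    (out : option 'rV[F]_n) :
  (1 <= t)%N ->
  two_power_ELP C A B t ->
  c \in C ->
  wt e = t ->
  row_free H ->
  (forall x : 'rV[F]_n, (x \in C) = (H *m x^T == 0)) ->
  alg_run H A B C (c + e) out ->
  (out = Some c <-> shortc A (supp e) = Mset A B C (c + e)).
Proof.
move=> t_gt0 [AB_C t_A _ AC_n _] C_c wt_e _ H_C run.
have Ae_M := shortc_supp_subset_Mset e C_c AB_C.
split=> [out_c | M_Ae].
  move: run; rewrite out_c => -[u [_ _ /eqP]].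
  rewrite -addrA -{1}[c]addr0 (inj_eq (addrI c)) eq_sym subr_eq0 => /eqP e_u.
  apply/eqP; rewrite eqEsubset Ae_M subset_shortc //; first exact: Mset_subv.
  by rewrite (congr1 (@supp _ _) e_u) supp_extendJ.
have e_Z : supp e \subset Zset (Mset A B C (c + e)) by rewrite -M_Ae subset_Zset_shortc.
have e_A : (wt e < \dim A)%N by rewrite wt_e.
have C_Z := Zset_Mset_codeword_eq0 C_c AB_C e_A AC_n.
case: out run => [z [u [_ Hu ->]] | no_sol].
  by rewrite (erasure_decode_eq H_C C_c C_Z e_Z Hu).
have e_neq0 : e != 0 by rewrite -wt_eq0 wt_e -lt0n.
have [u u_neq0 Hu] := erasure_decode_solvable H_C C_c e_Z e_neq0.
by move: (no_sol u u_neq0); rewrite Hu eqxx.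
Qed.
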